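(* Let $[a,b]$ be an interval with $b-a=1$, let $\mu_0$ be a distribution and let $\mu_1$ be obtained from $\mu_0$ by the extreme move on $[a,b]$. Then $S[\mu_1]-S[\mu_0]\ge 3\,(M_2[\mu_1]-M_2[\mu_0])^2$.
   Context: A distribution is a finite set $\mu=\{(x_1,m_1),\dots,(x_k,m_k)\}$ with $x_i\in\mathbb R$ distinct and $m_i>0$; $\mu(A)=\sum_{x_i\in A}m_i$. Moments: $M_j[\mu]=\sum_i m_ix_i^j$. Spread: $S[\mu]=\sum_{i<j}|x_i-x_j|m_im_j$. The extreme move on $[a,b]$ applied to $\mu$ yields the unique distribution $\mu'$ with $\mu'\{a<x<b\}=0$, $\mu'(\{x\})=\mu(\{x\})$ for all $x\notin[a,b]$, $M_0[\mu']=M_0[\mu]$ and $M_1[\mu']=M_1[\mu]$ (i.e., all mass in $[a,b]$ is moved to the endpoints $a,b$ preserving total mass and center of mass). *)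

From Stdlib Require Import Reals Lra List.
Import ListNotations.
Open Scope R_scope.

(* A distribution: finite list of (point, mass) pairs. *)
Definition distrib := list (R * R).

Definition is_dist (mu : distrib) : Prop :=
  NoDup (map fst mu) /\ Forall (fun p => 0 < snd p) mu.

Fixpoint moment (j : nat) (mu : distrib) : R :=
  match mu with
  | [] => 0
  | (x, m) :: t => m * x ^ j + moment j t
  end.

Fixpoint spread_row (x m : R) (t : distrib) : R :=
  match t with
  | [] => 0
  | (y, n) :: t' => Rabs (x - y) * m * n + spread_row x m t'
  end.

Fixpoint spread (mu : distrib) : R :=
  match mu with
  | [] => 0
  | (x, m) :: t => spread_row x m t + spread t
  end.

Fixpoint mass_open (a b : R) (mu : distrib) : R :=
  match mu with
  | [] => 0
  | (x, m) :: t =>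
      (if Rlt_dec a x then if Rlt_dec x b then m else 0 else 0)
      + mass_open a b t
  end.

Fixpoint mass_pt (y : R) (mu : distrib) : R :=
  match mu with
  | [] => 0
  | (x, m) :: t => (if Req_EM_T x y then m else 0) + mass_pt y t
  end.

Definition extreme_move (a b : R) (mu mu' : distrib) : Prop :=
  is_dist mu' /\
  mass_open a b mu' = 0 /\
  (forall x, ~ (a <= x <= b) -> mass_pt x mu' = mass_pt x mu) /\
  moment 0 mu' = moment 0 mu /\
  moment 1 mu' = moment 1 mu.

From Stdlib Require Import Reals Lra Psatz List Permutation Sorted Mergesort Orders.
Import ListNotations.
Open Scope R_scope.

(* Split mu0 into the part O outside [a,b] and the part I inside [a,b], and mu1
   into its outside part (a permutation of O, since point masses outside [a,b]
   are unchanged) and its inside part E, which lives on the endpoints {a,b} and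
   has the same mass and centre of mass as I.  All quantities are invariant
   under permutation.  Since every outside point lies on one side of [a,b], its
   interaction with I (resp. E) only depends on M_0 and M_1, which agree; hence
   both sides of the inequality only involve I and E.  Translating by a, we may
   take [a,b] = [0,1].  There, with m = M_0, s = M_1, q = M_2 of I, one has
   S[E] = s (m - s) and M_2[E] = s, and the inequality becomes
       s (m - s) - S[I] >= 3 (s - q)^2.
   Writing G(t) for the mass of I to the right of t, s(m - s) - S[I] is
   the integral of (G - s)^2 over [0,1] and s - q that of (1 - 2t)(G - s), so
   this is Cauchy-Schwarz; we prove it as the nonnegativity of the integral of
   (G(t) - s - 3(s - q)(1 - 2t))^2, computed piecewise along the sorted points. *)

Lemma moment_app j l1 l2 : moment j (l1 ++ l2) = moment j l1 + moment j l2.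
Proof. induction l1 as [|[x m] t IH]; simpl; [ring | rewrite IH; ring]. Qed.

Lemma moment_perm j l1 l2 : Permutation l1 l2 -> moment j l1 = moment j l2.
Proof. induction 1; simpl; try destruct x; try destruct y; lra. Qed.

Lemma spread_row_app x m l1 l2 :
  spread_row x m (l1 ++ l2) = spread_row x m l1 + spread_row x m l2.
Proof. induction l1 as [|[y n] t IH]; simpl; [ring | rewrite IH; ring]. Qed.

Lemma spread_row_perm x m l1 l2 :
  Permutation l1 l2 -> spread_row x m l1 = spread_row x m l2.
Proof. induction 1; simpl; try destruct x0; try destruct y; lra. Qed.

(* The spread is a symmetric pair sum, hence permutation invariant. *)
Lemma spread_perm l1 l2 : Permutation l1 l2 -> spread l1 = spread l2.
Proof.
  induction 1 as [| [x m] l1 l2 P IH | [y n] [x m] l | ]; simpl.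
  - reflexivity.
  - rewrite IH, (spread_row_perm _ _ _ _ P). ring.
  - rewrite (Rabs_minus_sym x y). ring.
  - lra.
Qed.

Fixpoint cross (l1 l2 : distrib) : R :=
  match l1 with
  | [] => 0
  | (x, m) :: t => spread_row x m l2 + cross t l2
  end.

Lemma spread_app l1 l2 : spread (l1 ++ l2) = spread l1 + spread l2 + cross l1 l2.
Proof.
  induction l1 as [|[x m] t IH]; simpl; [ring |].
  rewrite IH, spread_row_app. ring.
Qed.

Lemma spread_row_left x m t : Forall (fun q => x <= fst q) t ->
  spread_row x m t = m * (moment 1 t - x * moment 0 t).
Proof.
  induction t as [|[y n] t IH]; intros H; simpl; [ring |].
  inversion H as [| ? ? Hy Ht]; simpl in Hy.
  rewrite IH by assumption. rewrite Rabs_left1 by lra. ring.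
Qed.

Lemma spread_row_right x m t : Forall (fun q => fst q <= x) t ->
  spread_row x m t = m * (x * moment 0 t - moment 1 t).
Proof.
  induction t as [|[y n] t IH]; intros H; simpl; [ring |].
  inversion H as [| ? ? Hy Ht]; simpl in Hy.
  rewrite IH by assumption. rewrite Rabs_right by lra. ring.
Qed.

Definition shift (a : R) (l : distrib) : distrib :=
  map (fun p => (fst p - a, snd p)) l.

Lemma moment0_shift a l : moment 0 (shift a l) = moment 0 l.
Proof. induction l as [|[x m] t IH]; simpl; [ring | rewrite IH; ring]. Qed.

Lemma moment1_shift a l : moment 1 (shift a l) = moment 1 l - a * moment 0 l.
Proof. induction l as [|[x m] t IH]; simpl; [ring | rewrite IH; ring]. Qed.

Lemma moment2_shift a l :
  moment 2 (shift a l) = moment 2 l - 2 * a * moment 1 l + a ^ 2 * moment 0 l.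
Proof. induction l as [|[x m] t IH]; simpl; [ring | rewrite IH; ring]. Qed.

Lemma spread_shift a l : spread (shift a l) = spread l.
Proof.
  assert (Hrow : forall x m t, spread_row (x - a) m (shift a t) = spread_row x m t).
  { intros x m t; induction t as [|[y n] t IH]; simpl; [ring |].
    rewrite IH. replace (x - a - (y - a)) with (x - y) by ring. ring. }
  induction l as [|[x m] t IH]; simpl; [ring | rewrite IH, Hrow; ring].
Qed.

(* The integral over [u,v] of (al + be t)^2, in closed form. *)
Definition sq_integral (al be u v : R) : R :=
  al ^ 2 * (v - u) + al * be * (v ^ 2 - u ^ 2) + be ^ 2 * (v ^ 3 - u ^ 3) / 3.

Lemma sq_integral_nonneg al be u v : u <= v -> 0 <= sq_integral al be u v.
Proof.
  intros Huv.
  replace (sq_integral al be u v)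
    with ((v - u) * ((al + be * (u + v) / 2) ^ 2 + (be * (v - u)) ^ 2 / 12))
    by (unfold sq_integral; field).
  pose proof (pow2_ge_0 (al + be * (u + v) / 2)).
  pose proof (pow2_ge_0 (be * (v - u))).
  apply Rmult_le_pos; lra.
Qed.

Definition point_le (p q : R * R) : Prop := fst p <= fst q.

(* For l sorted with points in [u,1], step_sq lam u c l is the integral over
   [u,1] of (G(t) - lam (1 - 2t))^2, where the step function G equals c on
   [u, first point) and drops by the mass of each point it passes. *)
Fixpoint step_sq (lam u c : R) (l : distrib) : R :=
  match l with
  | [] => sq_integral (c - lam) (2 * lam) u 1
  | (y, n) :: t => sq_integral (c - lam) (2 * lam) u y + step_sq lam y (c - n) t
  end.

Lemma step_sq_nonneg lam l : forall u c,
  StronglySorted point_le l -> Forall (fun p => u <= fst p <= 1) l -> u <= 1 ->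
  0 <= step_sq lam u c l.
Proof.
  induction l as [|[y n] t IH]; intros u c Hsorted Hrange Hu; simpl.
  - now apply sq_integral_nonneg.
  - apply StronglySorted_inv in Hsorted as [Hsorted Hhead].
    inversion Hrange as [| ? ? Hy Ht]; simpl in Hy.
    assert (0 <= step_sq lam y (c - n) t).
    { apply IH; [assumption | | lra].
      rewrite Forall_forall in *. intros p Hp.
      split; [apply (Hhead p Hp) | apply (Ht p Hp)]. }
    pose proof (sq_integral_nonneg (c - lam) (2 * lam) u y ltac:(lra)). lra.
Qed.

Lemma step_sq_closed lam l : forall u c, StronglySorted point_le l ->
  step_sq lam u c l =
    sq_integral (c - lam) (2 * lam) u 1
    - 2 * (c * (moment 0 l - moment 1 l) + lam * (moment 1 l - moment 2 l))
    + moment 0 l * (moment 0 l - moment 1 l) - spread l.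
Proof.
  induction l as [|[y n] t IH]; intros u c Hsorted; simpl; [ring |].
  apply StronglySorted_inv in Hsorted as [Hsorted Hhead].
  rewrite IH, spread_row_left by assumption.
  unfold sq_integral. field.
Qed.

Lemma unit_gap_sorted l :
  StronglySorted point_le l -> Forall (fun p => 0 <= fst p <= 1) l ->
  moment 1 l * (moment 0 l - moment 1 l) - spread l
  >= 3 * (moment 1 l - moment 2 l) ^ 2.
Proof.
  intros Hsorted Hrange.
  set (lam := 3 * (moment 1 l - moment 2 l)).
  pose proof (step_sq_nonneg lam l 0 (moment 0 l - moment 1 l) Hsorted Hrange
                ltac:(lra)) as Hnonneg.
  rewrite step_sq_closed in Hnonneg by assumption.
  unfold sq_integral, lam in Hnonneg. nra.
Qed.

Module PointOrder <: TotalLeBool.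
  Definition t : Type := (R * R)%type.
  Definition leb (p q : t) : bool := if Rle_dec (fst p) (fst q) then true else false.
  Theorem leb_total : forall p q, leb p q = true \/ leb q p = true.
  Proof.
    intros p q; unfold leb.
    destruct (Rle_dec (fst p) (fst q)); destruct (Rle_dec (fst q) (fst p)); auto; lra.
  Qed.
End PointOrder.

Module PointSort := Sort PointOrder.

Lemma point_sort_sorted l : StronglySorted point_le (PointSort.sort l).
Proof.
  assert (Htrans : Transitive (fun p q => is_true (PointOrder.leb p q))).
  { intros p q r; unfold is_true, PointOrder.leb.
    repeat destruct Rle_dec; easy || lra. }
  generalize (PointSort.StronglySorted_sort l Htrans).
  generalize (PointSort.sort l); intros s Hs.
  induction Hs as [| p s _ IH Hp]; constructor; [assumption |].
  refine (Forall_impl _ _ Hp).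
  unfold is_true, PointOrder.leb, point_le; intros q; now destruct Rle_dec.
Qed.

Lemma unit_gap l : Forall (fun p => 0 <= fst p <= 1) l ->
  moment 1 l * (moment 0 l - moment 1 l) - spread l
  >= 3 * (moment 1 l - moment 2 l) ^ 2.
Proof.
  intros Hrange.
  pose proof (PointSort.Permuted_sort l) as P.
  rewrite (moment_perm 0 _ _ P), (moment_perm 1 _ _ P), (moment_perm 2 _ _ P),
    (spread_perm _ _ P).
  apply unit_gap_sorted; [apply point_sort_sorted |].
  exact (Permutation_Forall P Hrange).
Qed.

Lemma two_point_form E : Forall (fun p => fst p = 0 \/ fst p = 1) E ->
  spread E = (moment 0 E - moment 1 E) * moment 1 E /\ moment 2 E = moment 1 E.
Proof.
  induction E as [|[x m] t IH]; intros H; simpl; [split; ring |].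
  inversion H as [| ? ? Hx Ht]; simpl in Hx.
  destruct (IH Ht) as [IHs IHm]. rewrite IHs, IHm.
  destruct Hx as [-> | ->].
  - rewrite spread_row_left; [split; ring |].
    refine (Forall_impl _ _ Ht); intros p; lra.
  - rewrite spread_row_right; [split; ring |].
    refine (Forall_impl _ _ Ht); intros p; lra.
Qed.

Lemma inside_gain a b I E : b - a = 1 ->
  Forall (fun p => a <= fst p <= b) I ->
  Forall (fun p => fst p = a \/ fst p = b) E ->
  moment 0 E = moment 0 I -> moment 1 E = moment 1 I ->
  spread E - spread I >= 3 * (moment 2 E - moment 2 I) ^ 2.
Proof.
  intros Hab HI HE H0 H1.
  assert (HI' : Forall (fun p => 0 <= fst p <= 1) (shift a I)).
  { apply Forall_map. refine (Forall_impl _ _ HI); simpl; intros; lra. }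
  assert (HE' : Forall (fun p => fst p = 0 \/ fst p = 1) (shift a E)).
  { apply Forall_map. refine (Forall_impl _ _ HE); simpl; intros; lra. }
  destruct (two_point_form _ HE') as [HsE HmE].
  pose proof (unit_gap _ HI') as Hgap.
  rewrite spread_shift, moment0_shift, moment1_shift in HsE.
  rewrite moment2_shift, moment1_shift in HmE.
  rewrite spread_shift, moment0_shift, moment1_shift, moment2_shift in Hgap.
  rewrite H0, H1 in HsE, HmE.
  rewrite HsE.
  replace (moment 2 E) with
    (moment 1 I - a * moment 0 I + 2 * a * moment 1 I - a ^ 2 * moment 0 I) by lra.
  lra.
Qed.

(* Adding points outside [a,b] to both sides does not change the gain: each of
   them sees I and E only through their (equal) mass and first moment. *)
Lemma cross_outside a b O I E :
  Forall (fun p => ~ (a <= fst p <= b)) O ->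
  Forall (fun p => a <= fst p <= b) I -> Forall (fun p => a <= fst p <= b) E ->
  moment 0 E = moment 0 I -> moment 1 E = moment 1 I ->
  cross O E = cross O I.
Proof.
  intros HO HI HE H0 H1.
  induction O as [|[x m] t IH]; simpl; [reflexivity |].
  inversion HO as [| ? ? Hx HO']; simpl in Hx. rewrite IH by assumption.
  destruct (Rlt_dec x a).
  - rewrite !spread_row_left; [rewrite H0, H1; ring | |];
      [refine (Forall_impl _ _ HI) | refine (Forall_impl _ _ HE)]; intros; lra.
  - rewrite !spread_row_right; [rewrite H0, H1; ring | |];
      [refine (Forall_impl _ _ HI) | refine (Forall_impl _ _ HE)]; intros; lra.
Qed.

Lemma gain_with_outside a b O I E : b - a = 1 ->
  Forall (fun p => ~ (a <= fst p <= b)) O ->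
  Forall (fun p => a <= fst p <= b) I ->
  Forall (fun p => fst p = a \/ fst p = b) E ->
  moment 0 E = moment 0 I -> moment 1 E = moment 1 I ->
  spread (O ++ E) - spread (O ++ I)
  >= 3 * (moment 2 (O ++ E) - moment 2 (O ++ I)) ^ 2.
Proof.
  intros Hab HO HI HE H0 H1.
  assert (HE' : Forall (fun p => a <= fst p <= b) E).
  { refine (Forall_impl _ _ HE); intros; lra. }
  rewrite !spread_app, !moment_app, (cross_outside a b O I E) by assumption.
  replace (moment 2 O + moment 2 E - (moment 2 O + moment 2 I))
    with (moment 2 E - moment 2 I) by ring.
  pose proof (inside_gain a b I E Hab HI HE H0 H1). lra.
Qed.

Lemma mass_pt_notin x l : ~ In x (map fst l) -> mass_pt x l = 0.
Proof.
  induction l as [|[y m] t IH]; simpl; intros H; [reflexivity |].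
  destruct Req_EM_T; [subst; tauto |]. rewrite IH by tauto. ring.
Qed.

Lemma mass_pt_in x m l : NoDup (map fst l) -> In (x, m) l -> mass_pt x l = m.
Proof.
  induction l as [|[y n] t IH]; simpl; intros Hnd Hin; [contradiction |].
  inversion Hnd as [| ? ? Hy Hnd']; subst.
  destruct Hin as [Heq | Hin].
  - injection Heq as -> ->. destruct Req_EM_T; [| congruence].
    rewrite mass_pt_notin by assumption. ring.
  - destruct Req_EM_T as [-> | _].
    + exfalso. apply Hy, in_map_iff. now exists (x, m).
    + rewrite IH by assumption. ring.
Qed.

Lemma in_dist_iff x m l : is_dist l -> (In (x, m) l <-> 0 < m /\ mass_pt x l = m).
Proof.
  intros [Hnd Hpos]. rewrite Forall_forall in Hpos. split.
  - intros Hin. split; [exact (Hpos _ Hin) | exact (mass_pt_in x m l Hnd Hin)].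
  - intros [Hm Hmass].
    destruct (in_dec Req_EM_T x (map fst l)) as [Hx | Hx].
    + apply in_map_iff in Hx as [[x' m'] [Hx' Hin]]; simpl in Hx'; subst x'.
      rewrite (mass_pt_in x m' l Hnd Hin) in Hmass. now subst.
    + rewrite mass_pt_notin in Hmass by assumption. lra.
Qed.

Lemma perm_of_same_masses l1 l2 : is_dist l1 -> is_dist l2 ->
  (forall x, mass_pt x l1 = mass_pt x l2) -> Permutation l1 l2.
Proof.
  intros D1 D2 Hmass.
  apply NoDup_Permutation;
    [exact (NoDup_map_inv _ _ (proj1 D1)) | exact (NoDup_map_inv _ _ (proj1 D2)) |].
  intros [x m]. rewrite (in_dist_iff x m l1 D1), (in_dist_iff x m l2 D2), Hmass.
  reflexivity.
Qed.

Definition in_interval (a b x : R) : bool :=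
  if Rle_dec a x then if Rle_dec x b then true else false else false.

Lemma in_interval_spec a b x : in_interval a b x = true <-> a <= x <= b.
Proof.
  unfold in_interval.
  destruct (Rle_dec a x); destruct (Rle_dec x b); split; intros; easy || lra.
Qed.

Definition inside (a b : R) (l : distrib) : distrib :=
  filter (fun p => in_interval a b (fst p)) l.

Definition outside (a b : R) (l : distrib) : distrib :=
  filter (fun p => negb (in_interval a b (fst p))) l.

Lemma outside_inside_perm a b l : Permutation l (outside a b l ++ inside a b l).
Proof.
  unfold outside, inside.
  induction l as [|p t IH]; simpl; [constructor |].
  destruct (in_interval a b (fst p)); simpl.
  - eapply perm_trans; [apply perm_skip, IH | apply Permutation_middle].
  - now apply perm_skip.
Qed.

Lemma outside_spec a b l : Forall (fun p => ~ (a <= fst p <= b)) (outside a b l).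
Proof.
  apply Forall_forall. intros p Hp. apply filter_In in Hp as [_ Hp].
  rewrite <- in_interval_spec. now destruct (in_interval a b (fst p)).
Qed.

Lemma inside_spec a b l : Forall (fun p => a <= fst p <= b) (inside a b l).
Proof.
  apply Forall_forall. intros p Hp. apply filter_In in Hp as [_ Hp].
  now apply in_interval_spec.
Qed.

Lemma is_dist_outside a b l : is_dist l -> is_dist (outside a b l).
Proof.
  intros [Hnd Hpos]. split.
  - unfold outside.
    rewrite <- (filter_map_swap (fun x => negb (in_interval a b x))).
    now apply NoDup_filter.
  - apply Forall_forall. intros p Hp. apply filter_In in Hp as [Hp _].
    exact (proj1 (Forall_forall _ _) Hpos p Hp).
Qed.

Lemma mass_pt_outside a b x l :
  mass_pt x (outside a b l) = if in_interval a b x then 0 else mass_pt x l.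
Proof.
  unfold outside.
  induction l as [|[y m] t IH]; simpl; [now destruct (in_interval a b x) |].
  destruct (in_interval a b y) eqn:Hy; simpl; rewrite IH;
    destruct (in_interval a b x) eqn:Hx; destruct (Req_EM_T y x);
    subst; try congruence; lra.
Qed.

Lemma mass_open_nonneg a b l : Forall (fun p => 0 < snd p) l -> 0 <= mass_open a b l.
Proof.
  induction l as [|[x m] t IH]; intros Hpos; simpl; [lra |].
  inversion Hpos as [| ? ? Hm Ht]; simpl in Hm.
  specialize (IH Ht). destruct Rlt_dec; [destruct Rlt_dec |]; lra.
Qed.

Lemma no_point_in_open a b l : Forall (fun p => 0 < snd p) l ->
  mass_open a b l = 0 -> Forall (fun p => ~ (a < fst p < b)) l.
Proof.
  induction l as [|[x m] t IH]; intros Hpos Hzero; constructor;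
    inversion Hpos as [| ? ? Hm Ht]; simpl in Hm, Hzero;
    pose proof (mass_open_nonneg a b t Ht).
  - simpl; intros [Hax Hxb].
    destruct Rlt_dec; [destruct Rlt_dec |]; lra.
  - apply IH; [assumption |].
    destruct Rlt_dec; [destruct Rlt_dec |]; lra.
Qed.

Lemma extreme_move_split a b mu0 mu1 : is_dist mu0 -> extreme_move a b mu0 mu1 ->
  exists O I E,
    Permutation mu0 (O ++ I) /\ Permutation mu1 (O ++ E) /\
    Forall (fun p => ~ (a <= fst p <= b)) O /\
    Forall (fun p => a <= fst p <= b) I /\
    Forall (fun p => fst p = a \/ fst p = b) E /\
    moment 0 E = moment 0 I /\ moment 1 E = moment 1 I.
Proof.
  intros D0 [D1 [Hopen [Hpt [HM0 HM1]]]].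
  assert (Pout : Permutation (outside a b mu1) (outside a b mu0)).
  { apply perm_of_same_masses; try apply is_dist_outside; try assumption.
    intros x. rewrite !mass_pt_outside.
    destruct (in_interval a b x) eqn:Hx; [reflexivity |].
    apply Hpt. rewrite <- in_interval_spec, Hx. discriminate. }
  assert (P0 := outside_inside_perm a b mu0).
  assert (P1 : Permutation mu1 (outside a b mu0 ++ inside a b mu1)).
  { eapply perm_trans; [apply outside_inside_perm | now apply Permutation_app_tail]. }
  exists (outside a b mu0), (inside a b mu0), (inside a b mu1).
  rewrite (moment_perm 0 _ _ P0), (moment_perm 0 _ _ P1), !moment_app in HM0.
  rewrite (moment_perm 1 _ _ P0), (moment_perm 1 _ _ P1), !moment_app in HM1.
  repeat split; try assumption; try apply outside_spec; try apply inside_spec; try lra.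
  apply Forall_forall. intros p Hp.
  assert (Hab := proj1 (Forall_forall _ _) (inside_spec a b mu1) p Hp).
  assert (Hin : In p mu1) by (apply filter_In in Hp; tauto).
  assert (Hnot := proj1 (Forall_forall _ _)
                    (no_point_in_open a b mu1 (proj2 D1) Hopen) p Hin).
  simpl in Hab, Hnot.
  destruct (Req_EM_T (fst p) a); [now left | right; lra].
Qed.

Theorem mainTheorem6 (a b : R) (mu0 mu1 : distrib) :
  b - a = 1 ->
  is_dist mu0 ->
  extreme_move a b mu0 mu1 ->
  spread mu1 - spread mu0 >= 3 * (moment 2 mu1 - moment 2 mu0) ^ 2.
Proof.
  intros Hab D0 Hmove.
  destruct (extreme_move_split a b mu0 mu1 D0 Hmove)
    as (O & I & E & P0 & P1 & HO & HI & HE & H0 & H1).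
  rewrite (spread_perm _ _ P0), (spread_perm _ _ P1),
    (moment_perm 2 _ _ P0), (moment_perm 2 _ _ P1).
  exact (gain_with_outside a b O I E Hab HO HI HE H0 H1).
Qed.
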